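(* Suppose $p_{XY}$ has full support on $\mathcal{X}\times\mathcal{Y}$. Then $(p_{XY},p_{Z|XY})$ is computable with perfect security if and only if for every $y,y'\in\mathcal{Y}$ the following hold: (1) $k(y)=k(y')=:k$ and $\{\vec\alpha_1^{(y)},\dots,\vec\alpha_k^{(y)}\}=\{\vec\alpha_1^{(y')},\dots,\vec\alpha_k^{(y')}\}$; and (2) after indexing the classes so that $\vec\alpha_i^{(y)}=\vec\alpha_i^{(y')}$ for every $i\in[k]$, one has for every $i\in[k]$ and every $x\in\mathcal{X}$: \[\sum_{z\in\mathcal{Z}_i^{(y)}}p_{Z|XY}(z|x,y)=\sum_{z\in\mathcal{Z}_i^{(y')}}p_{Z|XY}(z|x,y').\]
   Context: $\mathcal{X},\mathcal{Y},\mathcal{Z}$ are finite. $(p_{XY},p_{Z|XY})$ is computable with perfect security if there exists a joint p.m.f. $p(u,x,y,z)=p_{XY}(x,y)p_{Z|XY}(z|x,y)p(u|x,y,z)$ (with $U$ on a finite set) satisfying the Markov chains $U-X-Y$, $Z-(U,Y)-X$ and $U-(Y,Z)-X$. For $y\in\mathcal{Y}$ let $\mathcal{Z}^{(y)}=\{z\in\mathcal{Z}:\exists x,\ p_{Z|XY}(z|x,y)>0\}$. For $z,z'\in\mathcal{Z}^{(y)}$, write $z\equiv_y z'$ if the column vectors $(p_{Z|XY}(z|x,y))_{x\in\mathcal{X}}$ and $(p_{Z|XY}(z'|x,y))_{x\in\mathcal{X}}$ are positive scalar multiples of each other; this is an equivalence relation partitioning $\mathcal{Z}^{(y)}=\mathcal{Z}_1^{(y)}\uplus\cdots\uplus\mathcal{Z}_{k(y)}^{(y)}$.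 For each class, the matrix $A_i^{(y)}(x,z)=p_{Z|XY}(z|x,y)$, $(x,z)\in\mathcal{X}\times\mathcal{Z}_i^{(y)}$, is rank one and can be uniquely written as $A_i^{(y)}(x,z)=\vec\alpha_i^{(y)}(x)\vec\gamma_i^{(y)}(z)$ with $\vec\alpha_i^{(y)}$ a probability vector on $\mathcal{X}$. Distinct classes for the same $y$ have distinct $\vec\alpha$'s. *)

From HB Require Import structures.
From mathcomp Require Import all_boot all_order all_algebra.
From Stdlib Require Import ClassicalEpsilon.
Set Implicit Arguments. Unset Strict Implicit. Unset Printing Implicit Defensive.
Import Order.TTheory GRing.Theory Num.Theory.
Local Open Scope ring_scope.

(* Classical boolean reflection of a proposition (used to form finite sets
   from the Prop-valued equivalence relation of the paper). *)
Definition asbool (P : Prop) : bool :=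
  if excluded_middle_informative P then true else false.

Section Defs.
Variable R : realFieldType.

(* Markov chain A - B - C for a joint p.m.f. P on A x B x C:
   P(a,b,c) P(b) = P(a,b) P(b,c). *)
Definition markov (A B C : finType) (P : A -> B -> C -> R) : Prop :=
  forall a b c,
    P a b c * (\sum_(a' : A) \sum_(c' : C) P a' b c')
    = (\sum_(c' : C) P a b c') * (\sum_(a' : A) P a' b c).

Variables (X Y Z : finType).

(* Standing hypotheses: pXY is a p.m.f. on X x Y, pZ z x y = p_{Z|XY}(z|x,y)
   is a conditional p.m.f. *)
Definition is_pmf2 (pXY : X -> Y -> R) : Prop :=
  (forall x y, 0 <= pXY x y) /\ \sum_(x : X) \sum_(y : Y) pXY x y = 1.

Definition is_cond_pmf (pZ : Z -> X -> Y -> R) : Prop :=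
  (forall z x y, 0 <= pZ z x y) /\ (forall x y, \sum_(z : Z) pZ z x y = 1).

Definition joint (U : finType) (pXY : X -> Y -> R) (pZ : Z -> X -> Y -> R)
  (pU : U -> X -> Y -> Z -> R) (u : U) (x : X) (y : Y) (z : Z) : R :=
  pXY x y * pZ z x y * pU u x y z.

Definition perfectly_secure_computable (pXY : X -> Y -> R) (pZ : Z -> X -> Y -> R)
  : Prop :=
  exists (U : finType) (pU : U -> X -> Y -> Z -> R),
    (forall u x y z, 0 <= pU u x y z) /\
    (forall x y z, \sum_(u : U) pU u x y z = 1) /\
    let J := joint pXY pZ pU in
    (* U - X - Y  (Z marginalised out) *)
    markov (fun (u : U) (x : X) (y : Y) => \sum_(z : Z) J u x y z) /\
    (* Z - (U,Y) - X *)
    markov (fun (z : Z) (uy : U * Y) (x : X) => J uy.1 x uy.2 z) /\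
    (* U - (Y,Z) - X *)
    markov (fun (u : U) (yz : Y * Z) (x : X) => J u x yz.1 yz.2).

Variable pZ : Z -> X -> Y -> R.

Definition suppZ (y : Y) : {set Z} := [set z | [exists x, 0 < pZ z x y]].

Definition equivZ (y : Y) (z z' : Z) : Prop :=
  z \in suppZ y /\ z' \in suppZ y /\
  exists c : R, 0 < c /\ forall x, pZ z x y = c * pZ z' x y.

Definition classZ (y : Y) (z : Z) : {set Z} :=
  [set z' in suppZ y | asbool (equivZ y z' z)].

Definition classes (y : Y) : {set {set Z}} := [set classZ y z | z in suppZ y].

Definition is_alpha (y : Y) (C : {set Z}) (a : X -> R) : Prop :=
  (forall x, 0 <= a x) /\ \sum_(x : X) a x = 1 /\
  exists g : Z -> R, forall x z, z \in C -> pZ z x y = a x * g z.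

End Defs.

(* Necessity: given a secure auxiliary U, the chain U - (Y,Z) - X makes
   p(u|x,y,z) independent of x on the support of z, and U - X - Y makes
   p(u|x,y) =: q(u|x) independent of y.  Together with Z - (U,Y) - X this
   forces the column of z at y to be proportional to q(u|.) whenever
   p(z|x,y) p(u|x,y,z) > 0.  So the alpha of each class at y is a normalised
   q(u|.), which reappears as the alpha of a class at every y', and the class
   sum at (x,y) is the sum of q(u|x) over the u with q(u|.) proportional to
   alpha, a quantity that does not depend on y.
   Sufficiency: fix y0 and let U be the class at y0 whose alpha is that of the
   class of z at y.  This deterministic U makes all three joint distributions
   factorise, which gives the Markov chains. *)

From mathcomp Require Import all_boot all_order all_algebra.
From mathcomp Require Import ring lra.
From Stdlib Require Import ClassicalEpsilon.
Import Order.TTheory GRing.Theory Num.Theory.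
Local Open Scope ring_scope.
Set Implicit Arguments. Unset Strict Implicit.

Lemma asboolP (P : Prop) : asbool P = true <-> P.
Proof. by rewrite /asbool; case: excluded_middle_informative. Qed.

Section NonnegativeSums.
Variable R : realDomainType.

Lemma psumr_gt0P (I : finType) (F : I -> R) :
  (forall i, 0 <= F i) -> 0 < \sum_i F i <-> exists j, 0 < F j.
Proof.
move=> F0; split => [s_gt0|[j Fj_gt0]].
  have : \sum_i F i <> 0 by move=> e; rewrite e ltxx in s_gt0.
  by case/psumr_neq0P => [i _|j /andP[_ Fj_gt0]]; [exact: F0|exists j].
rewrite (bigD1 j) //=.
have : 0 <= \sum_(i | i != j) F i by apply: sumr_ge0 => i _; exact: F0.
lra.
Qed.

Lemma pmulr_gt0P (a b : R) : 0 <= a -> 0 <= b -> 0 < a * b <-> 0 < a /\ 0 < b.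
Proof.
rewrite !le_eqVlt => /orP[/eqP <-|a_gt0]; first by rewrite mul0r !ltxx; split => [|[]].
case/orP => [/eqP <-|b_gt0]; first by rewrite mulr0 !ltxx; split => [|[]].
by split => // _; exact: mulr_gt0.
Qed.

Lemma ge0_ngt0_eq0 (t : R) : 0 <= t -> ~ (0 < t) -> t = 0.
Proof. by rewrite le_eqVlt => /orP[/eqP -> | t_gt0] // /(_ t_gt0). Qed.

End NonnegativeSums.

Section Proportionality.
Variables (R : realFieldType) (T : finType).

Definition propto (v w : T -> R) : Prop :=
  exists c : R, 0 < c /\ forall x, v x = c * w x.

Lemma propto_refl v : propto v v.
Proof. by exists 1; split => // x; rewrite mul1r. Qed.

Lemma propto_sym v w : propto v w -> propto w v.
Proof.
case=> c [c_gt0 vw]; exists c^-1; split; first by rewrite invr_gt0.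
by move=> x; rewrite vw mulrA mulVf ?mul1r // gt_eqF.
Qed.

Lemma propto_trans u v w : propto u v -> propto v w -> propto u w.
Proof.
case=> c [c_gt0 uv] [d [d_gt0 vw]]; exists (c * d); split; first exact: mulr_gt0.
by move=> x; rewrite uv vw mulrA.
Qed.

Lemma propto_normalized_eq v a b : propto v a -> propto v b ->
  \sum_x a x = 1 -> \sum_x b x = 1 -> forall x, a x = b x.
Proof.
case=> c [c_gt0 va] [d [d_gt0 vb]] a1 b1.
have sum_v_c : \sum_x v x = c by rewrite (eq_bigr _ (fun x _ => va x)) -mulr_sumr a1 mulr1.
have sum_v_d : \sum_x v x = d by rewrite (eq_bigr _ (fun x _ => vb x)) -mulr_sumr b1 mulr1.
have d_neq0 : d != 0 by rewrite gt_eqF.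
by move=> x; have := va x; rewrite vb -sum_v_c sum_v_d => /(mulfI d_neq0).
Qed.

End Proportionality.

Section Classes.
Variables (R : realFieldType) (X Y Z : finType) (pZ : Z -> X -> Y -> R).
Hypothesis pZ_ge0 : forall z x y, 0 <= pZ z x y.

(* [equivZ pZ y z z'] unfolds to [z, z' \in suppZ pZ y] together with
   [propto (colZ y z) (colZ y z')]. *)
Definition colZ (y : Y) (z : Z) : X -> R := fun x => pZ z x y.

Definition alpha_matched (y : Y) (C : {set Z}) (y' : Y) (C' : {set Z}) : Prop :=
  exists a : X -> R, is_alpha pZ y C a /\ is_alpha pZ y' C' a.

Definition classes_matched (y y' : Y) : Prop :=
  #|classes pZ y| = #|classes pZ y'|
  /\ (forall C, C \in classes pZ y ->
        exists2 C', C' \in classes pZ y' & alpha_matched y C y' C')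
  /\ (forall C', C' \in classes pZ y' ->
        exists2 C, C \in classes pZ y & alpha_matched y C y' C').

Definition class_sums_agree (y y' : Y) : Prop :=
  forall C C' (a : X -> R), C \in classes pZ y -> C' \in classes pZ y' ->
    is_alpha pZ y C a -> is_alpha pZ y' C' a ->
    forall x, \sum_(z in C) pZ z x y = \sum_(z in C') pZ z x y'.

Lemma suppP y z : reflect (exists x, 0 < pZ z x y) (z \in suppZ pZ y).
Proof. by rewrite inE; apply: (iffP existsP). Qed.

Lemma notin_suppZ_eq0 y z x : z \notin suppZ pZ y -> pZ z x y = 0.
Proof.
move=> z_out; apply: ge0_ngt0_eq0 => // pZ_gt0.
by case/negP: z_out; apply/suppP; exists x.
Qed.

Lemma in_classZ y z z0 :
  z \in classZ pZ y z0 <-> z \in suppZ pZ y /\ equivZ pZ y z z0.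
Proof.
rewrite inE; split => [/andP[-> /asboolP] //|[-> equiv]].
by apply/asboolP.
Qed.

Lemma classZ_self y z : z \in suppZ pZ y -> z \in classZ pZ y z.
Proof. by move=> z_in; apply/in_classZ; do 3 split => //; exact: propto_refl. Qed.

Lemma classZ_in_classes y z : z \in suppZ pZ y -> classZ pZ y z \in classes pZ y.
Proof. exact: imset_f. Qed.

Lemma colsum_gt0 y z : z \in suppZ pZ y -> 0 < \sum_x pZ z x y.
Proof. by case/suppP => x pZ_gt0; apply/psumr_gt0P => //; exists x. Qed.

Lemma classesP y C :
  reflect (exists2 z, z \in suppZ pZ y & C = classZ pZ y z) (C \in classes pZ y).
Proof. exact: imsetP. Qed.

Lemma is_alpha_col y C a z : is_alpha pZ y C a -> z \in C ->
  forall x, pZ z x y = a x * \sum_x' pZ z x' y.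
Proof.
case=> _ [a1 [g pZ_ag]] z_in x.
have -> : \sum_x' pZ z x' y = g z.
  by rewrite (eq_bigr _ (fun x' _ => pZ_ag x' z z_in)) -mulr_suml a1 mul1r.
exact: pZ_ag.
Qed.

Lemma is_alpha_propto y C a z : is_alpha pZ y C a -> z \in C ->
  z \in suppZ pZ y -> propto (colZ y z) a.
Proof.
move=> alpha_a z_in z_supp; exists (\sum_x' pZ z x' y).
by split; [exact: colsum_gt0 | move=> x; rewrite /colZ (is_alpha_col alpha_a z_in) mulrC].
Qed.

Lemma propto_is_alpha y z0 a : (forall x, 0 <= a x) -> \sum_x a x = 1 ->
  z0 \in suppZ pZ y -> propto (colZ y z0) a -> is_alpha pZ y (classZ pZ y z0) a.
Proof.
move=> a_ge0 a1 z0_supp z0_a; do 2 split => //.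
exists (fun z => \sum_x pZ z x y) => x z /in_classZ [_ [_ [_ z_z0]]].
have [c [_ z_a]] := propto_trans z_z0 z0_a.
have -> : \sum_x0 pZ z x0 y = c.
  by rewrite (eq_bigr _ (fun x' _ => z_a x')) -mulr_sumr a1 mulr1.
by rewrite mulrC; exact: z_a.
Qed.

Lemma classZ_propto_eq y z1 z2 a : z1 \in suppZ pZ y -> z2 \in suppZ pZ y ->
  propto (colZ y z1) a -> propto (colZ y z2) a -> classZ pZ y z1 = classZ pZ y z2.
Proof.
move=> z1_supp z2_supp z1_a z2_a.
have z1_z2 := propto_trans z1_a (propto_sym z2_a).
apply/setP => z; apply/idP/idP => /in_classZ [z_supp [_ [_ z_zi]]];
  apply/in_classZ; do 3 split => //.
- exact: propto_trans z_zi z1_z2.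
- exact: propto_trans z_zi (propto_sym z1_z2).
Qed.

Lemma is_alpha_uniq y C a b : C \in classes pZ y ->
  is_alpha pZ y C a -> is_alpha pZ y C b -> forall x, a x = b x.
Proof.
case/classesP => z0 z0_supp -> alpha_a alpha_b.
have z0_in := classZ_self z0_supp.
apply: (propto_normalized_eq (is_alpha_propto alpha_a z0_in z0_supp)
                             (is_alpha_propto alpha_b z0_in z0_supp)).
  by case: alpha_a => _ [].
by case: alpha_b => _ [].
Qed.

Lemma is_alpha_inj y C1 C2 a : C1 \in classes pZ y -> C2 \in classes pZ y ->
  is_alpha pZ y C1 a -> is_alpha pZ y C2 a -> C1 = C2.
Proof.
case/classesP => z1 z1_supp -> /classesP [z2 z2_supp ->] alpha1 alpha2.
exact: (classZ_propto_eq z1_supp z2_supp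
  (is_alpha_propto alpha1 (classZ_self z1_supp) z1_supp)
  (is_alpha_propto alpha2 (classZ_self z2_supp) z2_supp)).
Qed.

Lemma is_alpha_ext y C a b :
  is_alpha pZ y C a -> (forall x, a x = b x) -> is_alpha pZ y C b.
Proof.
case=> a_ge0 [a1 [g pZ_ag]] ab; split; first by move=> x; rewrite -ab.
split; first by rewrite -a1; apply: eq_bigr => x _; rewrite ab.
by exists g => x z z_in; rewrite -ab; exact: pZ_ag.
Qed.

Lemma is_alpha_exists y C : C \in classes pZ y -> exists a, is_alpha pZ y C a.
Proof.
case/classesP => z0 z0_supp ->; have s_gt0 := colsum_gt0 z0_supp.
exists (fun x => pZ z0 x y / \sum_x' pZ z0 x' y); apply: propto_is_alpha => //.
- by move=> x; apply: divr_ge0 => //; exact: ltW.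
- by rewrite -mulr_suml mulfV // gt_eqF.
- exists (\sum_x' pZ z0 x' y); split => // x.
  by rewrite /colZ mulrC divfK // gt_eqF.
Qed.

Lemma alpha_matched_uniqr y C y' C1 C2 : C \in classes pZ y ->
  C1 \in classes pZ y' -> C2 \in classes pZ y' ->
  alpha_matched y C y' C1 -> alpha_matched y C y' C2 -> C1 = C2.
Proof.
move=> C_in C1_in C2_in [a [alpha_a alpha1]] [b [alpha_b alpha2]].
apply: (is_alpha_inj C1_in C2_in alpha1); apply: (is_alpha_ext alpha2) => x.
exact: is_alpha_uniq C_in alpha_b alpha_a x.
Qed.

Lemma alpha_matched_uniql y C1 C2 y' C' : C1 \in classes pZ y ->
  C2 \in classes pZ y -> C' \in classes pZ y' ->
  alpha_matched y C1 y' C' -> alpha_matched y C2 y' C' -> C1 = C2.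
Proof.
move=> C1_in C2_in C'_in [a [alpha1 alpha_a]] [b [alpha2 alpha_b]].
apply: (is_alpha_inj C1_in C2_in alpha1); apply: (is_alpha_ext alpha2) => x.
exact: is_alpha_uniq C'_in alpha_b alpha_a x.
Qed.

Lemma classZ_of_mem y C z : C \in classes pZ y -> z \in C -> classZ pZ y z = C.
Proof.
case/classesP => z0 z0_supp -> /in_classZ [z_supp [_ [_ z_z0]]].
exact: classZ_propto_eq z_supp z0_supp z_z0 (propto_refl _).
Qed.

Lemma alpha_matched_sym y C y' C' : alpha_matched y C y' C' -> alpha_matched y' C' y C.
Proof. by case=> a [alpha alpha']; exists a. Qed.

Lemma mem_class_of_propto y C a z : C \in classes pZ y -> is_alpha pZ y C a ->
  z \in suppZ pZ y -> propto (colZ y z) a -> z \in C.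
Proof.
move=> C_in alpha_a z_supp z_a.
have [a_ge0 [a1 _]] := alpha_a.
have -> : C = classZ pZ y z.
  exact: is_alpha_inj C_in (classZ_in_classes z_supp) alpha_a
    (propto_is_alpha a_ge0 a1 z_supp z_a).
exact: classZ_self.
Qed.

Lemma card_classes_le y y' :
  (forall C, C \in classes pZ y ->
     exists2 C', C' \in classes pZ y' & alpha_matched y C y' C') ->
  (#|classes pZ y| <= #|classes pZ y'|)%N.
Proof.
move=> matched.
pose f C := odflt C [pick C' in classes pZ y' | asbool (alpha_matched y C y' C')].
have f_matched C : C \in classes pZ y ->
    f C \in classes pZ y' /\ alpha_matched y C y' (f C).
  move=> C_in; rewrite /f; case: pickP => [C' /andP[C'_in /asboolP] //|none].
  have [C' C'_in C_C'] := matched C C_in.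
  by have := none C'; rewrite C'_in (proj2 (asboolP _) C_C').
rewrite -(card_in_imset (f := f)).
  apply/subset_leq_card/subsetP => C' /imsetP [C C_in ->].
  by case: (f_matched C C_in).
move=> C1 C2 C1_in C2_in eq_f.
have [fC1_in C1_fC1] := f_matched C1 C1_in.
have [_ C2_fC2] := f_matched C2 C2_in.
by apply: (alpha_matched_uniql C1_in C2_in fC1_in C1_fC1); rewrite eq_f.
Qed.

End Classes.

Lemma markov_of_factor (R : realFieldType) (A B C : finType) (P : A -> B -> C -> R) :
  (forall b, exists (h : A -> R) (k : C -> R), forall a c, P a b c = h a * k c) ->
  markov P.
Proof.
move=> factor a b c; have [h [k P_hk]] := factor b.
have sum_ac : \sum_a' \sum_c' P a' b c' = (\sum_a' h a') * (\sum_c' k c').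
  rewrite mulr_suml; apply: eq_bigr => a' _; rewrite mulr_sumr.
  by apply: eq_bigr => c' _; exact: P_hk.
have sum_c : \sum_c' P a b c' = h a * \sum_c' k c'.
  by rewrite mulr_sumr; apply: eq_bigr => c' _; exact: P_hk.
have sum_a : \sum_a' P a' b c = (\sum_a' h a') * k c.
  by rewrite mulr_suml; apply: eq_bigr => a' _; exact: P_hk.
rewrite sum_ac sum_c sum_a P_hk; ring.
Qed.

Section Necessity.
Variables (R : realFieldType) (X Y Z U : finType).
Variables (pXY : X -> Y -> R) (pZ : Z -> X -> Y -> R) (pU : U -> X -> Y -> Z -> R).
Hypothesis pXY_gt0 : forall x y, 0 < pXY x y.
Hypothesis pZ_ge0 : forall z x y, 0 <= pZ z x y.
Hypothesis pZ_sum1 : forall x y, \sum_z pZ z x y = 1.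
Hypothesis pU_ge0 : forall u x y z, 0 <= pU u x y z.
Hypothesis pU_sum1 : forall x y z, \sum_u pU u x y z = 1.
Let J := joint pXY pZ pU.
Hypothesis markov_UXY : markov (fun (u : U) (x : X) (y : Y) => \sum_z J u x y z).
Hypothesis markov_ZUYX : markov (fun (z : Z) (uy : U * Y) (x : X) => J uy.1 x uy.2 z).
Hypothesis markov_UYZX : markov (fun (u : U) (yz : Y * Z) (x : X) => J u x yz.1 yz.2).

Definition pUXY u x y := \sum_z J u x y z.

(* q(u|x) = p(u|x,y) for every y, by U - X - Y (see pUXY_qU). *)
Definition qU u x := (\sum_y pUXY u x y) / (\sum_y pXY x y).

Lemma J_ge0 u x y z : 0 <= J u x y z.
Proof. by rewrite /J /joint !mulr_ge0 // ltW. Qed.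

Lemma sum_J_U x y z : \sum_u J u x y z = pXY x y * pZ z x y.
Proof. by rewrite /J /joint -mulr_sumr pU_sum1 mulr1. Qed.

Lemma sum_pUXY_U x y : \sum_u pUXY u x y = pXY x y.
Proof.
rewrite /pUXY exchange_big /=; under eq_bigr do rewrite sum_J_U.
by rewrite -mulr_sumr pZ_sum1 mulr1.
Qed.

Lemma pU_ratio u x y z : 0 < pZ z x y ->
  pU u x y z = (\sum_x' J u x' y z) / (\sum_x' pXY x' y * pZ z x' y).
Proof.
move=> pZ_gt0; have := markov_UYZX u (y, z) x; rewrite /=.
rewrite (exchange_big _ _ _ _ _ (fun u' x' => J u' x' y z)) /=.
under eq_bigr do rewrite sum_J_U.
rewrite sum_J_U {1}/J /joint.
have pXZ_gt0 : 0 < pXY x y * pZ z x y by exact: mulr_gt0.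
have S_neq0 : \sum_x' pXY x' y * pZ z x' y != 0.
  rewrite gt_eqF //; apply/psumr_gt0P; last by exists x.
  by move=> x'; rewrite mulr_ge0 // ltW.
move=> eq_markov.
apply: (mulfI (x := pXY x y * pZ z x y)); first by rewrite gt_eqF.
apply: (mulIf S_neq0); rewrite eq_markov; field; exact: S_neq0.
Qed.

Lemma pU_indep_x u x x' y z : 0 < pZ z x y -> 0 < pZ z x' y ->
  pU u x y z = pU u x' y z.
Proof. by move=> pZ_gt0 pZ'_gt0; rewrite !pU_ratio. Qed.

Lemma pUXY_qU u x y : pUXY u x y = pXY x y * qU u x.
Proof.
have := markov_UXY u x y; rewrite /= -/(pUXY u x y).
rewrite (exchange_big _ _ _ _ _ (fun u' y' => pUXY u' x y')) /=.
rewrite -/(\sum_u' pUXY u' x y) sum_pUXY_U.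
under eq_bigr do rewrite sum_pUXY_U.
have S_neq0 : \sum_y' pXY x y' != 0.
  by rewrite gt_eqF //; apply/psumr_gt0P; [move=> y'; exact: ltW | exists y].
move=> eq_markov; apply: (mulIf S_neq0).
by rewrite eq_markov /qU; field; exact: S_neq0.
Qed.

Lemma qU_sumZ u x y : qU u x = \sum_z pZ z x y * pU u x y z.
Proof.
apply: (mulfI (x := pXY x y)); first by rewrite gt_eqF.
rewrite -pUXY_qU /pUXY /J /joint mulr_sumr.
by apply: eq_bigr => z _; rewrite mulrA.
Qed.

Lemma qU_ge0 u x : 0 <= qU u x.
Proof.
case: (pickP Y) => [y _|Y0]; last by rewrite /qU big_pred0 // mul0r.
by rewrite (qU_sumZ u x y) sumr_ge0 // => z _; rewrite mulr_ge0.
Qed.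

Lemma J_factor u x0 y z : 0 < pZ z x0 y ->
  forall x, J u x y z = pU u x0 y z * (pXY x y * pZ z x y).
Proof.
move=> pZ0_gt0 x; rewrite /J /joint mulrC.
have := pZ_ge0 z x y; rewrite le_eqVlt => /orP[/eqP <- | pZ_gt0]; first by rewrite !mulr0.
by rewrite (pU_indep_x u pZ_gt0 pZ0_gt0).
Qed.

Lemma colZ_propto_qU u x0 y z : 0 < pZ z x0 y -> 0 < pU u x0 y z ->
  propto (colZ pZ y z) (qU u).
Proof.
move=> pZ_gt0 pU_gt0.
set W := \sum_x' J u x' y z; set Ms := \sum_x' pUXY u x' y.
have J_gt0 : 0 < J u x0 y z by rewrite /J /joint !mulr_gt0.
have W_gt0 : 0 < W by apply/psumr_gt0P; [move=> x; exact: J_ge0 | exists x0].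
have Ms_gt0 : 0 < Ms.
  apply/psumr_gt0P; first by move=> x; apply: sumr_ge0 => z' _; exact: J_ge0.
  by exists x0; apply/psumr_gt0P; [move=> z'; exact: J_ge0 | exists z].
exists (W / (pU u x0 y z * Ms)); split; first by rewrite divr_gt0 // mulr_gt0.
move=> x; have := markov_ZUYX z (u, y) x; rewrite /=.
rewrite (exchange_big _ _ _ _ _ (fun z' x' => J u x' y z')) /= -/W -/Ms.
rewrite -/(pUXY u x y) pUXY_qU (J_factor u pZ_gt0) /colZ => eq_markov.
apply: (mulfI (x := pU u x0 y z * Ms * pXY x y)); first by rewrite gt_eqF // !mulr_gt0.
have -> : pU u x0 y z * Ms * pXY x y * pZ z x y =
  pU u x0 y z * (pXY x y * pZ z x y) * Ms by ring.
by rewrite eq_markov; field; rewrite !gt_eqF.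
Qed.

Lemma colZ_propto_qU_of_gt0 u x y z : 0 < pZ z x y * pU u x y z ->
  propto (colZ pZ y z) (qU u).
Proof. by case/pmulr_gt0P => // pZ_gt0 pU_gt0; exact: colZ_propto_qU pZ_gt0 pU_gt0. Qed.

Lemma suppZ_of_gt0 u x y z : 0 < pZ z x y * pU u x y z -> z \in suppZ pZ y.
Proof. by case/pmulr_gt0P => // pZ_gt0 _; apply/suppP; exists x. Qed.

Lemma qU_gt0 u x y z : 0 < pZ z x y * pU u x y z -> 0 < qU u x.
Proof.
move=> term_gt0; rewrite (qU_sumZ u x y); apply/psumr_gt0P; last by exists z.
by move=> z'; rewrite mulr_ge0.
Qed.

Definition alphaU u x := qU u x / \sum_x' qU u x'.

Lemma is_alpha_alphaU u x y z : 0 < pZ z x y * pU u x y z ->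
  is_alpha pZ y (classZ pZ y z) (alphaU u).
Proof.
move=> term_gt0; have z_q := colZ_propto_qU_of_gt0 term_gt0.
have S_gt0 : 0 < \sum_x' qU u x'.
  by apply/psumr_gt0P; [exact: qU_ge0 | exists x; exact: qU_gt0 term_gt0].
apply: propto_is_alpha (suppZ_of_gt0 term_gt0) _ => //.
- by move=> x'; rewrite divr_ge0 ?qU_ge0 // ltW.
- by rewrite -mulr_suml mulfV // gt_eqF.
- apply: propto_trans z_q _; exists (\sum_x' qU u x'); split => // x'.
  by rewrite /alphaU mulrC divfK // gt_eqF.
Qed.

Lemma class_matched y y' C : C \in classes pZ y ->
  exists2 C', C' \in classes pZ y' & alpha_matched pZ y C y' C'.
Proof.
case/classesP => z0 /suppP [x0 pZ0_gt0] ->.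
have [u pU0_gt0] : exists u, 0 < pU u x0 y z0.
  by apply/psumr_gt0P => //; rewrite pU_sum1 ltr01.
have term0_gt0 : 0 < pZ z0 x0 y * pU u x0 y z0 by exact: mulr_gt0.
have [z' term'_gt0] : exists z', 0 < pZ z' x0 y' * pU u x0 y' z'.
  apply/psumr_gt0P; first by move=> z'; rewrite mulr_ge0.
  by rewrite -qU_sumZ; exact: qU_gt0 term0_gt0.
exists (classZ pZ y' z'); first exact: classZ_in_classes (suppZ_of_gt0 term'_gt0).
by exists (alphaU u); split; [exact: is_alpha_alphaU term0_gt0 | exact: is_alpha_alphaU term'_gt0].
Qed.

Lemma class_fiber_sum y C a u x : C \in classes pZ y -> is_alpha pZ y C a ->
  \sum_(z in C) pZ z x y * pU u x y z
  = if asbool (propto a (qU u)) then qU u x else 0.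
Proof.
move=> C_in alpha_a; case: ifPn => [/asboolP a_q | /negP not_a_q].
  rewrite (qU_sumZ u x y) [RHS](bigID (mem C)) /= [X in _ = _ + X]big1 ?addr0 //.
  move=> z z_notin; apply: ge0_ngt0_eq0; first by rewrite mulr_ge0.
  move=> term_gt0; case/negP: z_notin.
  apply: (mem_class_of_propto pZ_ge0 C_in alpha_a (suppZ_of_gt0 term_gt0)).
  exact: propto_trans (colZ_propto_qU_of_gt0 term_gt0) (propto_sym a_q).
apply: big1 => z z_in; apply: ge0_ngt0_eq0; first by rewrite mulr_ge0.
move=> term_gt0; apply: not_a_q; apply/asboolP.
have z_a := is_alpha_propto pZ_ge0 alpha_a z_in (suppZ_of_gt0 term_gt0).
exact: propto_trans (propto_sym z_a) (colZ_propto_qU_of_gt0 term_gt0).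
Qed.

Lemma class_sum_qU y C a x : C \in classes pZ y -> is_alpha pZ y C a ->
  \sum_(z in C) pZ z x y = \sum_(u | asbool (propto a (qU u))) qU u x.
Proof.
move=> C_in alpha_a.
have -> : \sum_(z in C) pZ z x y = \sum_(z in C) \sum_u pZ z x y * pU u x y z.
  by apply: eq_bigr => z _; rewrite -mulr_sumr pU_sum1 mulr1.
rewrite exchange_big [RHS]big_mkcond /=; apply: eq_bigr => u _.
exact: class_fiber_sum.
Qed.

Lemma classes_matched_of_secure y y' : classes_matched pZ y y'.
Proof.
split; first by apply/eqP; rewrite eqn_leq !card_classes_le // => C; exact: class_matched.
split=> [C|C']; first exact: class_matched.
by case/(class_matched y) => C C_in /alpha_matched_sym; exists C.
Qed.

Lemma class_sums_agree_of_secure y y' : class_sums_agree pZ y y'.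
Proof.
move=> C C' a C_in C'_in alpha_a alpha'_a x.
by rewrite (class_sum_qU x C_in alpha_a) (class_sum_qU x C'_in alpha'_a).
Qed.

End Necessity.

Section Sufficiency.
Variables (R : realFieldType) (X Y Z : finType).
Variables (pXY : X -> Y -> R) (pZ : Z -> X -> Y -> R).
Hypothesis pZ_ge0 : forall z x y, 0 <= pZ z x y.
Variable y0 : Y.
Hypothesis matched : forall y, classes_matched pZ y y0.
Hypothesis sums_agree : forall y, class_sums_agree pZ y y0.

(* The auxiliary variable takes values in {set Z}: the class at y0 whose
   alpha is the alpha of the class of z at y. *)
Definition classU (y : Y) (z : Z) : {set Z} :=
  odflt set0 [pick C0 in classes pZ y0 | asbool (alpha_matched pZ y (classZ pZ y z) y0 C0)].

Definition pU_det (u : {set Z}) (x : X) (y : Y) (z : Z) : R := (u == classU y z)%:R.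

Let J := joint pXY pZ pU_det.

Lemma classU_spec y z : z \in suppZ pZ y ->
  classU y z \in classes pZ y0 /\ alpha_matched pZ y (classZ pZ y z) y0 (classU y z).
Proof.
move=> z_supp; rewrite /classU; case: pickP => [C0 /andP[C0_in /asboolP] //|none].
have [_ [matched_to _]] := matched y.
have [C0 C0_in z_C0] := matched_to _ (classZ_in_classes z_supp).
by have := none C0; rewrite C0_in (proj2 (asboolP _) z_C0).
Qed.

Lemma pZ_classU y z a : z \in suppZ pZ y -> is_alpha pZ y0 (classU y z) a ->
  forall x, pZ z x y = a x * \sum_x' pZ z x' y.
Proof.
move=> z_supp alpha_a x; have [cU_in [b [alpha_z alpha_b]]] := classU_spec z_supp.
rewrite (is_alpha_col alpha_z (classZ_self z_supp)).
by rewrite (is_alpha_uniq pZ_ge0 cU_in alpha_b alpha_a).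
Qed.

Lemma classU_eq y C u z : C \in classes pZ y -> u \in classes pZ y0 ->
  alpha_matched pZ y C y0 u -> z \in suppZ pZ y -> (u == classU y z) = (z \in C).
Proof.
move=> C_in u_in C_u z_supp; have [cU_in z_cU] := classU_spec z_supp.
have cz_in := classZ_in_classes z_supp.
apply/eqP/idP => [u_eq | z_in].
  rewrite -u_eq in z_cU.
  by rewrite -(alpha_matched_uniql pZ_ge0 cz_in C_in u_in z_cU C_u) classZ_self.
rewrite (classZ_of_mem C_in z_in) in z_cU.
exact: (alpha_matched_uniqr pZ_ge0 C_in u_in cU_in C_u z_cU).
Qed.

Definition class_sum0 (u : {set Z}) (x : X) : R :=
  if u \in classes pZ y0 then \sum_(z in u) pZ z x y0 else 0.

Lemma sum_pU_det_Z u x y : \sum_z pZ z x y * pU_det u x y z = class_sum0 u x.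
Proof.
rewrite /class_sum0 /pU_det; case: ifPn => [u_in | u_notin]; last first.
  apply: big1 => z _; have [z_supp | z_notin] := boolP (z \in suppZ pZ y).
    have [cU_in _] := classU_spec z_supp.
    by case: eqP => [u_eq | _]; [rewrite u_eq cU_in in u_notin | rewrite mulr0].
  by rewrite notin_suppZ_eq0 ?mul0r.
have [_ [_ matched_from]] := matched y.
have [C C_in C_u] := matched_from u u_in.
have [a [alpha_C alpha_u]] := C_u.
rewrite -(sums_agree C_in u_in alpha_C alpha_u x) [RHS]big_mkcond /=.
apply: eq_bigr => z _; have [z_supp | z_notin] := boolP (z \in suppZ pZ y).
  by rewrite (classU_eq C_in u_in C_u z_supp); case: (z \in C); rewrite ?mulr1 ?mulr0.
by rewrite notin_suppZ_eq0 // mul0r; case: ifP.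
Qed.

Lemma pU_det_ge0 u x y z : 0 <= pU_det u x y z.
Proof. exact: ler0n. Qed.

Lemma pU_det_sum1 x y z : \sum_u pU_det u x y z = 1.
Proof.
rewrite (bigD1 (classU y z)) //= /pU_det eqxx big1 ?addr0 // => u /negbTE -> //.
Qed.

Lemma markov_UXY_det : markov (fun (u : {set Z}) (x : X) (y : Y) => \sum_z J u x y z).
Proof.
apply: markov_of_factor => x; exists (class_sum0^~ x), (pXY x) => u y.
rewrite -(sum_pU_det_Z u x y) mulrC mulr_sumr; apply: eq_bigr => z _.
by rewrite /J /joint mulrA.
Qed.

Lemma markov_ZUYX_det :
  markov (fun (z : Z) (uy : {set Z} * Y) (x : X) => J uy.1 x uy.2 z).
Proof.
apply: markov_of_factor => -[u y] /=.
have [u_in | u_notin] := boolP (u \in classes pZ y0); last first.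
  exists (fun _ => 0), (fun _ => 0) => z x; rewrite mul0r /J /joint /pU_det.
  have [z_supp | z_notin] := boolP (z \in suppZ pZ y); last first.
    by rewrite notin_suppZ_eq0 // mulr0 mul0r.
  have [cU_in _] := classU_spec z_supp.
  by case: eqP => [u_eq | _]; [rewrite u_eq cU_in in u_notin | rewrite mulr0].
have [a alpha_a] := is_alpha_exists pZ_ge0 u_in.
exists (fun z => if (z \in suppZ pZ y) && (u == classU y z) then \sum_x' pZ z x' y else 0).
exists (fun x => pXY x y * a x) => z x; rewrite /J /joint /pU_det.
have [z_supp | z_notin] := boolP (z \in suppZ pZ y); last first.
  by rewrite notin_suppZ_eq0 // mulr0 !mul0r.
case: eqP => [u_eq | _] /=; last by rewrite mulr0 mul0r.
rewrite u_eq in alpha_a.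
by rewrite (pZ_classU z_supp alpha_a) mulr1; ring.
Qed.

Lemma markov_UYZX_det :
  markov (fun (u : {set Z}) (yz : Y * Z) (x : X) => J u x yz.1 yz.2).
Proof.
apply: markov_of_factor => -[y z] /=.
exists (fun u => (u == classU y z)%:R), (fun x => pXY x y * pZ z x y) => u x.
by rewrite /J /joint mulrC.
Qed.

Lemma secure_of_matched : perfectly_secure_computable pXY pZ.
Proof.
exists _, pU_det; split; first exact: pU_det_ge0.
split; first exact: pU_det_sum1.
by split; [exact: markov_UXY_det | split; [exact: markov_ZUYX_det | exact: markov_UYZX_det]].
Qed.

End Sufficiency.

Lemma is_pmf2_card_gt0 (R : realFieldType) (X Y : finType) (pXY : X -> Y -> R) :
  is_pmf2 pXY -> (0 < #|Y|)%N.
Proof.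
case=> _ pXY_sum1; rewrite lt0n; apply/negP => /eqP /card0_eq Y0.
move: pXY_sum1; rewrite big1 => [/eqP|x _]; first by rewrite eq_sym oner_eq0.
by rewrite big_pred0.
Qed.

Theorem theorem3 (R : realFieldType) (X Y Z : finType)
  (pXY : X -> Y -> R) (pZ : Z -> X -> Y -> R) :
  is_pmf2 pXY -> is_cond_pmf pZ ->
  (forall x y, 0 < pXY x y) ->
  perfectly_secure_computable pXY pZ <->
  (forall y y' : Y,
     (* (1) k(y) = k(y') and equal sets of alpha vectors *)
     (#|classes pZ y| = #|classes pZ y'|
      /\ (forall C, C \in classes pZ y -> exists2 C', C' \in classes pZ y' &
            exists a : X -> R, is_alpha pZ y C a /\ is_alpha pZ y' C' a)
      /\ (forall C', C' \in classes pZ y' -> exists2 C, C \in classes pZ y &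
            exists a : X -> R, is_alpha pZ y C a /\ is_alpha pZ y' C' a))
     /\
     (* (2) classes with the same alpha have the same column sums *)
     (forall C C' (a : X -> R), C \in classes pZ y -> C' \in classes pZ y' ->
        is_alpha pZ y C a -> is_alpha pZ y' C' a ->
        forall x : X, \sum_(z in C) pZ z x y = \sum_(z in C') pZ z x y')).
Proof.
move=> pmf_XY [pZ_ge0 pZ_sum1] pXY_gt0; split.
  case=> U [pU [pU_ge0 [pU_sum1 [m_UXY [m_ZUYX m_UYZX]]]]] y y'; split.
    exact: (classes_matched_of_secure pXY_gt0 pZ_ge0 pZ_sum1 pU_ge0 pU_sum1 m_UXY m_ZUYX m_UYZX).
  exact: (class_sums_agree_of_secure pXY_gt0 pZ_ge0 pZ_sum1 pU_ge0 pU_sum1 m_UXY m_ZUYX m_UYZX).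
move=> conds; have /card_gt0P [y0 _] := is_pmf2_card_gt0 pmf_XY.
exact: (secure_of_matched pXY pZ_ge0 (fun y => (conds y y0).1) (fun y => (conds y y0).2)).
Qed.
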